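(* Let $\varphi\colon\mathcal{M}\to\mathcal{X}\subseteq\mathcal{E}$ be a smooth lift, where $\mathcal{M}$ is a smooth embedded submanifold of $\mathcal{E}'=\mathcal{E}_1\times\cdots\times\mathcal{E}_d$ (a product of Euclidean spaces) and $\varphi$ is defined on all of $\mathcal{E}'$ and is multilinear in its $d$ arguments. If $\mathcal{M}$ contains a point $(y_1,\dots,y_d)$ with $y_i=0$ for (at least) three indices $i$, and $0=\varphi(y_1,\dots,y_d)$ is not an isolated point of $\mathcal{X}$, then $\varphi$ does not satisfy ''2 $\Rightarrow$ 1'' at $(y_1,\dots,y_d)$.
   Context: $\mathcal{E}$ and $\mathcal{E}_i$ are finite-dimensional real inner product spaces; $\mathcal{X}=\varphi(\mathcal{M})$. Tangent cone $\mathrm{T}_x\mathcal{X}=\{\lim(x_i-x)/\tau_i: x_i\in\mathcal{X},\tau_i>0,\tau_i\to0\}$; $x$ is stationary for $f$ on $\mathcal{X}$ if $\langle\nabla f(x),v\rangle\ge0$ for all $v\in\mathrm{T}_x\mathcal{X}$. For $g=f\circ\varphi$, $y$ is 2-critical if $(g\circ c)'(0)=0$ and $(g\circ c)''(0)\ge0$ for all smooth curves $c$ in $\mathcal{M}$ with $c(0)=y$. ''2 $\Rightarrow$ 1'' at $y$: for every twice differentiable $f\colon\mathcal{E}\to\mathbb{R}$, if $y$ is 2-critical for $f\circ\varphi$ then $\varphi(y)$ is stationary for $f$ on $\mathcal{X}$. *)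

From HB Require Import structures.
From mathcomp Require Import all_boot all_order all_algebra.
From mathcomp Require Import all_classical all_reals all_analysis.
Set Implicit Arguments.
Unset Strict Implicit.
Unset Printing Implicit Defensive.
Import Order.TTheory GRing.Theory Num.Theory.
Import numFieldNormedType.Exports.
Local Open Scope classical_set_scope.
Local Open Scope ring_scope.

Section Defs.
Variable R : realType.

Fixpoint iterD {V W : normedModType R} (vs : seq V) (f : V -> W) : V -> W :=
  match vs with
  | [::] => f
  | v :: vs' => fun x => 'D_v (iterD vs' f) x
  end.

Definition smooth_on {V W : normedModType R} (U : set V) (f : V -> W) : Prop :=
  forall vs : seq V, forall x, U x ->
    {for x, continuous (iterD vs f)} /\ forall v : V, derivable (iterD vs f) x v.

(* smooth embedded submanifold of R^N (of codimension k), via local defining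
   functions: around each point p of M there is an open U and a smooth
   h : U -> R^k with Dh(p) surjective (rank k) and M \cap U = h^{-1}(0) \cap U *)
Definition embedded_submanifold (N : nat) (M : set 'rV[R]_N) : Prop :=
  exists k : nat, forall p, M p ->
    exists (U : set 'rV[R]_N) (h : 'rV[R]_N -> 'rV[R]_k),
      [/\ open U, U p, smooth_on U h,
          (forall w : 'rV[R]_k, exists v : 'rV[R]_N, 'D_v h p = w) &
          (forall x, U x -> (M x <-> h x = 0))].

(* E' = E_1 x ... x E_d is represented as R^N where coordinate j belongs to
   the factor blk j.  upd i y z replaces the i-th component of y by that of z. *)
Definition upd (N d : nat) (blk : 'I_N -> 'I_d) (i : 'I_d) (y z : 'rV[R]_N)
  : 'rV[R]_N := \row_j (if blk j == i then z 0 j else y 0 j).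

Definition block_zero (N d : nat) (blk : 'I_N -> 'I_d) (y : 'rV[R]_N) (i : 'I_d)
  : bool := [forall j, (blk j == i) ==> (y 0 j == 0)].

Definition multilinear (N d m : nat) (blk : 'I_N -> 'I_d)
  (phi : 'rV[R]_N -> 'rV[R]_m) : Prop :=
  forall (i : 'I_d) (y z1 z2 : 'rV[R]_N) (a : R),
    phi (upd blk i y (a *: z1 + z2)) =
      a *: phi (upd blk i y z1) + phi (upd blk i y z2).

Definition twice_differentiable (m : nat) (f : 'rV[R]_m -> R) : Prop :=
  (forall x, differentiable f x) /\
  (forall (v x : 'rV[R]_m), differentiable ('D_v f) x).

Definition tangent_cone (m : nat) (X : set 'rV[R]_m) (x : 'rV[R]_m)
  : set 'rV[R]_m := fun v =>
  exists (xs : nat -> 'rV[R]_m) (tau : nat -> R),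
    [/\ forall n, X (xs n), forall n, 0 < tau n,
        tau @ \oo --> (0 : R) &
        (fun n => (tau n)^-1 *: (xs n - x)) @ \oo --> v].

Definition stationary (m : nat) (f : 'rV[R]_m -> R) (X : set 'rV[R]_m)
  (x : 'rV[R]_m) : Prop :=
  forall v, tangent_cone X x v -> 0 <= 'd f x v.

Definition two_critical (N : nat) (g : 'rV[R]_N -> R) (M : set 'rV[R]_N)
  (y : 'rV[R]_N) : Prop :=
  forall c : R -> 'rV[R]_N,
    smooth_on setT c -> (forall t, M (c t)) -> c 0 = y ->
    derive1 (g \o c) 0 = 0 /\ 0 <= derive1 (derive1 (g \o c)) 0.

Definition two_implies_one (N m : nat) (phi : 'rV[R]_N -> 'rV[R]_m)
  (M : set 'rV[R]_N) (y : 'rV[R]_N) : Prop :=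
  forall f : 'rV[R]_m -> R, twice_differentiable f ->
    two_critical (f \o phi) M y -> stationary f (phi @` M) (phi y).

Definition not_isolated (m : nat) (X : set 'rV[R]_m) (x : 'rV[R]_m) : Prop :=
  forall U, nbhs x U -> exists z, [/\ X z, z != x & U z].

End Defs.

From Pilot Require Import Defs.
From HB Require Import structures.
From mathcomp Require Import all_boot all_order all_algebra.
From mathcomp Require Import all_classical all_reals all_analysis.
From mathcomp Require Import lra.
Import Order.TTheory GRing.Theory Num.Theory.
Import numFieldNormedType.Exports.
Local Open Scope classical_set_scope.
Local Open Scope ring_scope.

(* Along a smooth curve c with c 0 = y, expanding the multilinear phi in
   three blocks where y is zero writes t |-> phi (c t) as a sum of products of
   three coordinates of c, each vanishing at 0, with smooth factors; so it
   vanishes to third order at 0 and y is 2-critical for f \o phi whenever f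
   is linear.  On the other hand,
   as 0 = phi y is not isolated in X, the normalised points x / |x| of X near 0
   cluster at a unit tangent vector v, and f x = - v_k x_k with v_k != 0 has
   Df(0)[v] = - v_k ^ 2 < 0, so phi y is not stationary for f. *)

Set Implicit Arguments.
Unset Strict Implicit.

Section SmoothReal.
Variable R : realType.
Implicit Types (f g u : R -> R) (a : R).

Fixpoint derivable_upto (n : nat) g : Prop :=
  if n is n'.+1 then (forall t, derivable g t 1) /\ derivable_upto n' (derive1 g)
  else True.

Definition smooth g := forall n, derivable_upto n g.

Lemma derive1_add f g : (forall t, derivable f t 1) -> (forall t, derivable g t 1) ->
  derive1 (fun t => f t + g t) = fun t => derive1 f t + derive1 g t.
Proof. by move=> df dg; apply/funext => t; rewrite !derive1E; exact: deriveD. Qed.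

Lemma derive1_mul f g : (forall t, derivable f t 1) -> (forall t, derivable g t 1) ->
  derive1 (fun t => f t * g t) = fun t => f t * derive1 g t + g t * derive1 f t.
Proof. by move=> df dg; apply/funext => t; rewrite !derive1E; exact: deriveM. Qed.

Lemma derive1_cstE a : derive1 (fun _ : R => a) = fun _ => 0.
Proof. by apply/funext => t; exact: derive1_cst. Qed.

Lemma derivable_upto_cst n a : derivable_upto n (fun _ => a).
Proof.
elim: n a => //= n IH a; split=> [t|]; first exact: derivable_cst.
by rewrite derive1_cstE.
Qed.

Lemma derivable_uptoW n g : derivable_upto n.+1 g -> derivable_upto n g.
Proof. by elim: n g => //= n IH g [dg [ddg Dg]]; split => //; exact: IH. Qed.

Lemma derivable_upto_add n f g :
  derivable_upto n f -> derivable_upto n g -> derivable_upto n (fun t => f t + g t).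
Proof.
elim: n f g => //= n IH f g [df Df] [dg Dg]; split=> [t|]; first exact: derivableD.
by rewrite derive1_add //; exact: IH.
Qed.

Lemma derivable_upto_mul n f g :
  derivable_upto n f -> derivable_upto n g -> derivable_upto n (fun t => f t * g t).
Proof.
elim: n f g => //= n IH f g [df Df] [dg Dg]; split=> [t|]; first exact: derivableM.
rewrite derive1_mul //; apply: derivable_upto_add; apply: IH => //;
  exact: derivable_uptoW.
Qed.

Lemma smooth_cst a : smooth (fun _ => a).
Proof. by move=> n; exact: derivable_upto_cst. Qed.

Lemma smooth_add f g : smooth f -> smooth g -> smooth (fun t => f t + g t).
Proof. by move=> sf sg n; exact: derivable_upto_add. Qed.

Lemma smooth_mul f g : smooth f -> smooth g -> smooth (fun t => f t * g t).
Proof. by move=> sf sg n; exact: derivable_upto_mul. Qed.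

Lemma smooth_sub f g : smooth f -> smooth g -> smooth (fun t => f t - g t).
Proof.
move=> sf sg; have -> : (fun t => f t - g t) = fun t => f t + (-1) * g t.
  by apply/funext => t; rewrite mulN1r.
by apply: smooth_add => //; apply: smooth_mul => //; exact: smooth_cst.
Qed.

Lemma smooth_derivable g t : smooth g -> derivable g t 1.
Proof. by move=> sg; case: (sg 1%N). Qed.

Lemma smooth_derive1 g : smooth g -> smooth (derive1 g).
Proof. by move=> sg n; case: (sg n.+1). Qed.

Fixpoint vanishes_at0 (k : nat) g : Prop :=
  if k is k'.+1 then [/\ g 0 = 0, smooth g & vanishes_at0 k' (derive1 g)] else smooth g.

Lemma vanishes_at0W k g : vanishes_at0 k.+1 g -> vanishes_at0 k g.
Proof.
elim: k g => [|k IH] g /=; first by case.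
by case=> g0 sg [g'0 sg' vg']; split => //; exact: IH.
Qed.

Lemma vanishes_at0_add k f g :
  vanishes_at0 k f -> vanishes_at0 k g -> vanishes_at0 k (fun t => f t + g t).
Proof.
elim: k f g => [|k IH] f g /=; first exact: smooth_add.
case=> f0 sf vf [g0 sg vg]; split; [by rewrite f0 g0 addr0 | exact: smooth_add |].
by rewrite derive1_add => [|t|t]; [exact: IH | exact: smooth_derivable ..].
Qed.

Lemma vanishes_at0_zero k : vanishes_at0 k (fun _ => 0).
Proof.
elim: k => [|k IH] /=; first exact: smooth_cst.
by split=> //; [exact: smooth_cst | rewrite derive1_cstE].
Qed.

Lemma vanishes_at0_sum k (I : Type) (r : seq I) (P : pred I) (F : I -> R -> R) :
  (forall i, P i -> vanishes_at0 k (F i)) ->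
  vanishes_at0 k (fun t => \sum_(i <- r | P i) F i t).
Proof.
move=> vF; elim: r => [|i r IH].
  by under eq_fun do rewrite big_nil; exact: vanishes_at0_zero.
case Pi: (P i); under eq_fun do rewrite big_cons Pi; last exact: IH.
exact: vanishes_at0_add (vF _ Pi) IH.
Qed.

Lemma vanishes_at0_mull k u g :
  smooth u -> vanishes_at0 k g -> vanishes_at0 k (fun t => u t * g t).
Proof.
elim: k u g => [|k IH] u g /=; first exact: smooth_mul.
move=> su [g0 sg vg]; split; [by rewrite g0 mulr0 | exact: smooth_mul |].
rewrite derive1_mul => [|t|t]; [|exact: smooth_derivable ..].
apply: vanishes_at0_add; first exact: IH.
under eq_fun do rewrite mulrC.
by apply: IH; [exact: smooth_derive1 | apply: vanishes_at0W].
Qed.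

Lemma vanishes_at0_mul0 k u g : smooth u -> u 0 = 0 ->
  vanishes_at0 k g -> vanishes_at0 k.+1 (fun t => u t * g t).
Proof.
move=> su u0; elim: k g => [|k IH] g vg.
  split; [by rewrite u0 mul0r | exact: smooth_mul |].
  rewrite derive1_mul => [|t|t]; [|exact: smooth_derivable ..].
  by apply: smooth_add; apply: smooth_mul => //; exact: smooth_derive1.
have [_ sg vg'] := vg; split; [by rewrite u0 mul0r | exact: smooth_mul |].
rewrite derive1_mul => [|t|t]; [|exact: smooth_derivable ..].
apply: vanishes_at0_add; first exact: IH.
under eq_fun do rewrite mulrC.
exact: vanishes_at0_mull (smooth_derive1 su) vg.
Qed.

End SmoothReal.

Section CoordAffine.
Variables (R : realType) (N : nat).
Implicit Types (F : 'rV[R]_N -> R) (c : R -> 'rV[R]_N).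

(* Locked so that [mxE] does not unfold it. *)
Definition delta_row (j : 'I_N) : 'rV[R]_N := locked (delta_mx 0 j).

Lemma delta_rowE j (x : 'I_1) k : delta_row j x k = (j == k)%:R.
Proof. by rewrite /delta_row -lock mxE (ord1 x) eqxx eq_sym. Qed.

Definition coord_affine F :=
  forall z j s, F (z + s *: delta_row j) = F z + s * (F (z + delta_row j) - F z).

Lemma coord_affine_shift F w : coord_affine F -> coord_affine (fun z => F (z + w)).
Proof.
move=> FA z j s /=.
by rewrite -addrA (addrC (s *: _)) addrA FA -!addrA (addrC w).
Qed.

Lemma smooth_coord c j : smooth_on setT c -> smooth (fun t => c t 0 j).
Proof.
move=> sc n.
have {}sc (k : nat) t : derivable (Defs.iterD (nseq k (1 : R)) c) t 1.
  exact: (sc _ t I).2.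
elim: n c sc => //= n IH c sc; split=> [t|].
  by move: (sc 0%N t) => /derivable_mxP; apply.
have -> : derive1 (fun t => c t 0 j) = fun t => 'D_1 c t 0 j.
  by apply/funext => t; rewrite derive1E (derive_mx (sc 0%N t)) mxE.
apply: IH => k t; suff -> : Defs.iterD (nseq k (1 : R)) (fun t => 'D_1 c t) =
    Defs.iterD (nseq k.+1 (1 : R)) c by [].
by elim: k {t} => //= k ->.
Qed.

Lemma coord_affine_smooth c F :
  smooth_on setT c -> coord_affine F -> smooth (fun t => F (c t)).
Proof.
move=> sc.
(* Switch the coordinates of [c] on one at a time; [G] is affine along each
   step, so smoothness propagates. *)
pose trunc k t : 'rV[R]_N := \row_j (if (j < k)%N then c t 0 j else 0).
suff /(_ N (leqnn N)) trunc_smooth : forall k, (k <= N)%N ->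
    forall G, coord_affine G -> smooth (fun t => G (trunc k t)).
  move=> FA; have := trunc_smooth F FA; congr smooth; apply/funext => t.
  by congr F; apply/rowP => j; rewrite mxE ltn_ord.
elim=> [_ G _ | k IH kN G GA].
  have -> : (fun t => G (trunc 0%N t)) = fun _ => G 0.
    by apply/funext => t; congr G; apply/rowP => j; rewrite !mxE.
  exact: smooth_cst.
pose jk : 'I_N := Ordinal kN.
have trunc_next t : trunc k.+1 t = trunc k t + c t 0 jk *: delta_row jk.
  apply/rowP => j; rewrite !mxE delta_rowE ltnS leq_eqVlt.
  have [<-|ne] := eqVneq jk j; first by rewrite eqxx ltnn mulr1 add0r.
  by rewrite mulr0 addr0 -[k]/(val jk) (inj_eq val_inj) eq_sym (negbTE ne).
have -> : (fun t => G (trunc k.+1 t)) = fun t =>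
    G (trunc k t) + c t 0 jk * (G (trunc k t + delta_row jk) - G (trunc k t)).
  by apply/funext => t; rewrite trunc_next GA.
have {}IH := IH (ltnW kN).
apply: smooth_add; first exact: IH.
apply: smooth_mul; first exact: smooth_coord.
by apply: smooth_sub; [exact: (IH _ (coord_affine_shift _ GA)) | exact: IH].
Qed.

End CoordAffine.
Arguments delta_row {R N} j.

Section Blocks.
Variables (R : realType) (N d : nat) (blk : 'I_N -> 'I_d).
Implicit Types (psi : 'rV[R]_N -> R) (y z w : 'rV[R]_N) (i : 'I_d).

Lemma updE i y z (x : 'I_1) k :
  upd blk i y z x k = if blk k == i then z 0 k else y 0 k.
Proof. by rewrite mxE. Qed.

Lemma upd_comm i i' y w w' : i != i' ->
  upd blk i (upd blk i' y w) w' = upd blk i' (upd blk i y w') w.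
Proof.
move=> ne; apply/rowP => k; rewrite !updE.
by case: eqP => [bk|]; case: eqP => // bk'; move/eqP: ne; rewrite -bk -bk'.
Qed.

Definition linear_in i psi := forall y z1 z2 (a : R),
  psi (upd blk i y (a *: z1 + z2)) = a * psi (upd blk i y z1) + psi (upd blk i y z2).

Lemma multilinear_coord m (phi : 'rV[R]_N -> 'rV[R]_m) (a : R) (k : 'I_m) i :
  multilinear blk phi -> linear_in i (fun z => a * phi z 0 k).
Proof. by move=> ml y z1 z2 b /=; rewrite ml !mxE mulrDr mulrCA. Qed.

Lemma linear_in_upd0 i psi y : linear_in i psi -> psi (upd blk i y 0) = 0.
Proof.
move=> lin; have := lin y 0 0 1; rewrite scale1r addr0 mul1r.
by set p := psi _; lra.
Qed.

Lemma linear_in_expand i psi z : linear_in i psi ->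
  psi z = \sum_(j | blk j == i) z 0 j * psi (upd blk i z (delta_row j)).
Proof.
move=> lin.
have {1}-> : z = upd blk i z (\sum_(j | blk j == i) z 0 j *: delta_row j).
  apply/rowP => k; rewrite updE; case: ifP => // bk.
  rewrite summxE (bigD1 k) //= big1 ?addr0 => [|j /andP[_ jk]].
    by rewrite !mxE delta_rowE eqxx mulr1.
  by rewrite !mxE delta_rowE (negbTE jk) mulr0.
apply: (big_rec2 (fun x s => psi (upd blk i z x) = s)) => [|j x s _ <-].
  exact: linear_in_upd0.
exact: lin.
Qed.

Lemma linear_in_upd i i' psi w : i != i' -> linear_in i' psi ->
  linear_in i' (fun z => psi (upd blk i z w)).
Proof. by move=> ne lin y z1 z2 a /=; rewrite !(upd_comm _ _ _ ne); exact: lin. Qed.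

Lemma coord_affine_upd i w psi :
  coord_affine psi -> coord_affine (fun z => psi (upd blk i z w)).
Proof.
move=> psiA z j s /=.
have [bj|bj] := eqVneq (blk j) i.
  have upd_line s' : upd blk i (z + s' *: delta_row j) w = upd blk i z w.
    apply/rowP => k; rewrite !updE !mxE delta_rowE.
    case: eqP => // bk; have /negbTE -> : j != k by apply/eqP => jk; apply: bk; rewrite -jk.
    by rewrite mulr0 addr0.
  by rewrite upd_line -[delta_row j]scale1r upd_line subrr mulr0 addr0.
have upd_line s' : upd blk i (z + s' *: delta_row j) w = upd blk i z w + s' *: delta_row j.
  apply/rowP => k; rewrite !updE !mxE !delta_rowE.
  case: eqP => // bk.
  have /negbTE -> : j != k by apply/eqP => jk; move: bj; rewrite jk bk eqxx.
  by rewrite mulr0 addr0.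
by rewrite upd_line -[delta_row j]scale1r upd_line scale1r psiA.
Qed.

Lemma coord_affine_linear_in psi : (forall i, linear_in i psi) -> coord_affine psi.
Proof.
move=> lin z j s.
have line s' : z + s' *: delta_row j = upd blk (blk j) z (s' *: delta_row j + z).
  apply/rowP => k; rewrite updE !mxE delta_rowE.
  have [bk|bk] := eqVneq (blk k) (blk j); first by rewrite addrC.
  have /negbTE -> : j != k by apply/eqP => jk; move: bk; rewrite jk eqxx.
  by rewrite mulr0 addr0.
have line1 : z + delta_row j = upd blk (blk j) z (1 *: delta_row j + z).
  by rewrite -line scale1r.
have upd_id : upd blk (blk j) z z = z by apply/rowP => k; rewrite updE if_same.
by rewrite line line1 !lin upd_id mul1r addrK addrC.
Qed.

Lemma vanishes_at0_comp (s : seq 'I_d) (c : R -> 'rV[R]_N) psi :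
  uniq s -> smooth_on setT c -> {in s, forall i, block_zero blk (c 0) i} ->
  {in s, forall i, linear_in i psi} -> coord_affine psi ->
  vanishes_at0 (size s) (fun t => psi (c t)).
Proof.
move=> + sc; elim: s psi => [|i s IH] psi; first by move=> *; exact: coord_affine_smooth.
move=> /andP[i_s us] c0 lin psiA.
under eq_fun do rewrite (linear_in_expand _ (lin i (mem_head i s))).
apply: vanishes_at0_sum => j /eqP bj; apply: vanishes_at0_mul0.
- exact: smooth_coord.
- by have /forallP/(_ j)/implyP/(_ (introT eqP bj))/eqP := c0 i (mem_head i s).
apply: (IH (fun z => psi (upd blk i z (delta_row j)))) => // [i' i's|i' i's|].
- by apply: c0; rewrite in_cons i's orbT.
- apply: linear_in_upd; last by apply: lin; rewrite in_cons i's orbT.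
  by apply: contraNneq i_s => ->.
- exact: coord_affine_upd.
Qed.

Lemma multilinear_block_zero m (phi : 'rV[R]_N -> 'rV[R]_m) y i :
  multilinear blk phi -> block_zero blk y i -> phi y = 0.
Proof.
move=> ml /forallP y0; apply/rowP => k; rewrite mxE.
have -> : y = upd blk i y 0.
  apply/rowP => j; rewrite updE mxE; case: ifP => // bj.
  by have /implyP/(_ bj)/eqP := y0 j.
by have := linear_in_upd0 y (multilinear_coord 1 k i ml); rewrite mul1r.
Qed.

End Blocks.

Section TangentCone.
Variable R : realType.

Lemma cvg_harmonic_bound (V : normedModType R) (a : nat -> V) l :
  (forall n, `|l - a n| <= n.+1%:R^-1) -> a @ \oo --> l.
Proof.
move=> la; apply/cvgrPdist_le => e e0.
have /cvgrPdist_le /(_ e e0) := @cvg_harmonic R.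
apply: filterS => n /=; rewrite sub0r normrN ger0_norm ?harmonic_ge0 //.
exact: le_trans (la n).
Qed.

Lemma cluster_seq_harmonic (V : normedModType R) (u : nat -> V) v :
  cluster (u @ \oo) v ->
  exists ph : nat -> nat, forall n, (n <= ph n)%N /\ `|v - u (ph n)| < n.+1%:R^-1.
Proof.
move=> cv.
have near_v n : exists k, (n <= k)%N /\ `|v - u k| < n.+1%:R^-1.
  have tail : (u @ \oo) [set w | exists2 k, (n <= k)%N & w = u k].
    by exists n => // k /= nk; exists k.
  have nbhs_v : nbhs v (ball v n.+1%:R^-1) by apply: nbhsx_ballx; rewrite invr_gt0.
  have [_ [[k nk ->] /=]] := cv _ _ tail nbhs_v.
  by rewrite -ball_normE /ball_ /=; exists k.
by have [ph phP] := choice near_v; exists ph.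
Qed.

Lemma unit_ball_compact m : compact (closed_ball (0 : 'rV[R]_m) 1).
Proof.
apply: bounded_closed_compact; last exact: closed_ball_closed.
rewrite /bounded_set /bounded_near; near=> r => x.
rewrite closed_ballE // /closed_ball_ /= sub0r normrN => /le_trans; apply.
by near: r; apply: nbhs_pinfty_ge; rewrite num_real.
Unshelve. all: by end_near.
Qed.

Lemma tangent_cone_neq0 m (X : set 'rV[R]_m) :
  not_isolated X 0 -> exists2 v, tangent_cone X 0 v & v != 0.
Proof.
move=> NI.
have near0 n : exists z, [/\ X z, z != 0 & `|z| < n.+1%:R^-1].
  have [z [Xz z0]] : exists z, [/\ X z, z != 0 & ball 0 n.+1%:R^-1 z].
    by apply: NI; apply: nbhsx_ballx; rewrite invr_gt0.
  by rewrite -ball_normE /ball_ /= sub0r normrN => ?; exists z.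
have [xs xsP] := choice near0.
pose u n := `|xs n|^-1 *: xs n.
have normu n : `|u n| = 1.
  have [_ xs0 _] := xsP n.
  by rewrite normrZ normrV ?unitfE ?normr_eq0 // normr_id mulVf ?normr_eq0.
have u_ball : (u @ \oo) (closed_ball 0 1).
  by exists 0%N => // n _; rewrite closed_ballE // /closed_ball_ /= sub0r normrN normu.
have [v [_ cv]] := unit_ball_compact _ u_ball.
have [ph phP] := cluster_seq_harmonic cv.
exists v; last first.
  apply/eqP => v0; have [_] := phP 0%N.
  by rewrite v0 sub0r normrN normu invr1 ltxx.
exists (xs \o ph), (fun n => `|xs (ph n)|); split.
- by move=> n; have [] := xsP (ph n).
- by move=> n; have [_ ? _] := xsP (ph n); rewrite normr_gt0.
- apply: cvg_harmonic_bound => n; rewrite sub0r normrN normr_id.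
  have [_ _ /ltW /le_trans] := xsP (ph n); apply.
  by rewrite lef_pV2 ?posrE // ler_nat ltnS; case: (phP n).
- by apply: cvg_harmonic_bound => n; rewrite subr0; case: (phP n) => _ /ltW.
Qed.

End TangentCone.

Section CoordFun.
Variables (R : realType) (m : nat) (a : R) (k : 'I_m).

Definition coord_fun (x : 'rV[R]_m) : R := a * x 0 k.

Lemma differentiable_coord_fun x : differentiable coord_fun x.
Proof. exact: differentiableM (differentiable_cst a x) (differentiable_coord x 0 k). Qed.

Lemma derive_coord_fun x w : 'D_w coord_fun x = a * w 0 k.
Proof.
have dk : derivable (fun x : 'rV[R]_m => x 0 k) x w.
  by move/derivable_mxP: (@derivable_id _ _ x w); apply.
rewrite (deriveZ a dk); congr (a * _).
have := derive_mx (@derivable_id _ _ x w).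
by rewrite derive_id => /matrixP/(_ 0 k); rewrite mxE.
Qed.

Lemma twice_differentiable_coord_fun : twice_differentiable coord_fun.
Proof.
split=> [|w x]; first exact: differentiable_coord_fun.
have -> : 'D_w coord_fun = cst (a * w 0 k) by apply/funext => z; rewrite derive_coord_fun.
exact: differentiable_cst.
Qed.

Lemma diff_coord_fun x v : 'd coord_fun x v = a * v 0 k.
Proof. by rewrite -deriveE ?derive_coord_fun //; exact: differentiable_coord_fun. Qed.

End CoordFun.

Unset Implicit Arguments.
Set Strict Implicit.

Theorem proposition5p1 (R : realType) (d N m : nat) (blk : 'I_N -> 'I_d)
  (M : set 'rV[R]_N) (phi : 'rV[R]_N -> 'rV[R]_m) (y : 'rV[R]_N) :
  embedded_submanifold M ->
  multilinear blk phi ->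
  M y ->
  (3 <= #|[pred i : 'I_d | block_zero blk y i]|)%N ->
  not_isolated (phi @` M) 0 ->
  ~ two_implies_one phi M y.
Proof.
move=> _ ml _ /card_gt2P[i1 [i2 [i3 [[y1 y2 y3] [n12 n23 n31]]]]] NI two_one.
rewrite !inE in y1 y2 y3.
have phi_y : phi y = 0 := multilinear_block_zero ml y1.
have [v Tv /matrix0Pn[i0 [k vk]]] := tangent_cone_neq0 NI.
rewrite (ord1 i0) in vk.
pose f := coord_fun (- v 0 k) k.
have crit : two_critical (f \o phi) M y.
  move=> c sc _ c0.
  have [_ _ [h1 _ [h2 _ _]]] : vanishes_at0 3 (fun t => - v 0 k * phi (c t) 0 k).
    apply: (vanishes_at0_comp (blk := blk) (s := [:: i1; i2; i3])
              (psi := fun z => - v 0 k * phi z 0 k)) => //.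
    - by rewrite /= !inE negb_or n12 n23 eq_sym n31.
    - by move=> i; rewrite c0 !inE => /or3P[] /eqP ->.
    - by move=> i _; exact: multilinear_coord.
    - by apply: coord_affine_linear_in => i; exact: multilinear_coord.
  by split; [exact: h1 | rewrite h2].
have := two_one f (twice_differentiable_coord_fun _ _) crit v; rewrite phi_y => /(_ Tv).
by rewrite diff_coord_fun mulNr oppr_ge0 -expr2 leNgt lt_def sqrf_eq0 vk sqr_ge0.
Qed.
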